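(* Let $X$ be a metric space with bounded geometry. Then the normalisers of $\ell^\infty(X)$ in $C^*_u(X)$ and in $C^*_{uq}(X)$ coincide. More precisely, for $T\in\mathfrak B(\ell^2(X))$ the following are equivalent: (1) $T$ belongs to the normaliser of $\ell^\infty(X)$ in $C^*_u(X)$; (2) $T$ belongs to the normaliser of $\ell^\infty(X)$ in $C^*_{uq}(X)$; (3) $T=fV^\theta$ for some $f\in\ell^\infty(X)$ and some bijection $\theta:D\to R$ between subsets $D,R\subseteq X$ such that for every $\varepsilon>0$ there exists $K>0$ with $|f(x)|<\varepsilon$ for all $x\in D$ with $d(x,\theta(x))>K$.
   Context: Bounded geometry: $\sup_x|B(x,r)|<\infty$ for all $r>0$. $C^*_u(X)$ is the norm closure of finite propagation operators on $\ell^2(X)$; $C^*_{uq}(X)$ is the $C^*$-algebra of quasi-local operators ($T$ such that for each $\varepsilon>0$ there is $r>0$ with $\|\chi_AT\chi_B\|\leq\varepsilon$ whenever $d(A,B)\geq r$). $\ell^\infty(X)$ acts by multiplication. For a bijection $\theta:D\to R$, $V^\theta$ is the operator with matrix entries $V^\theta_{x,y}=1$ if $x\in D$ and $y=\theta(x)$, and $0$ otherwise. The normaliser of $\mathcal B$ in $\mathcal A$ is $\{a\in\mathcal A: a\mathcal Ba^*\cup a^*\mathcal Ba\subseteq\mathcal B\}$. *)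

From HB Require Import structures.
From mathcomp Require Import all_boot all_order all_algebra.
From mathcomp Require Import boolp classical_sets reals.
From mathcomp Require Import complex.
Set Implicit Arguments. Unset Strict Implicit. Unset Printing Implicit Defensive.
Import Order.TTheory GRing.Theory Num.Theory.
Local Open Scope ring_scope.

Section Defs.
Variables (R : realType) (X : eqType).
Local Notation C := (complex R).

Definition cabs (z : C) : R := let: Complex a b := z in Num.sqrt (a ^+ 2 + b ^+ 2).
Definition cconj (z : C) : C := let: Complex a b := z in Complex a (- b).

Definition is_metric (d : X -> X -> R) : Prop :=
  [/\ forall x y, 0 <= d x y,
      forall x y, d x y = 0 <-> x = y,
      forall x y, d x y = d y x &
      forall x y z, d x z <= d x y + d y z].

Definition bounded_geometry (d : X -> X -> R) : Prop :=
  forall r : R, 0 < r -> exists N : nat, forall (x : X) (s : seq X),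
    uniq s -> (forall y, y \in s -> d x y <= r) -> (size s <= N)%N.

(** Vectors in C^X; finite sets of points are represented by uniq sequences. *)
Definition vec := X -> C.

(** ||v||_2 <= c  (c >= 0), i.e. every finite partial sum of |v x|^2 is <= c^2 *)
Definition vnorm_le (v : vec) (c : R) : Prop :=
  0 <= c /\ forall s : seq X, uniq s -> \sum_(x <- s) cabs (v x) ^+ 2 <= c ^+ 2.

Definition l2 (v : vec) : Prop := exists c, vnorm_le v c.

(** unconditional (net) summation over X: sum_x a x = c *)
Definition has_sum (a : X -> C) (c : C) : Prop :=
  forall e : R, 0 < e -> exists s0 : seq X, uniq s0 /\
    forall s : seq X, uniq s -> {subset s0 <= s} ->
      cabs (\sum_(x <- s) a x - c) < e.

Definition inner (v w : vec) (c : C) : Prop :=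
  has_sum (fun x => v x * cconj (w x)) c.

(** Operators; only their action on l^2(X) matters. *)
Definition op := vec -> vec.

Definition op_eq (T S : op) : Prop := forall v, l2 v -> forall x, T v x = S v x.

Definition op_comp (T S : op) : op := fun v => T (S v).

Definition bounded_op (T : op) : Prop :=
  [/\ forall v, l2 v -> l2 (T v),
      forall (a : C) v w, l2 v -> l2 w ->
        forall x, T (fun y => a * v y + w y) x = a * T v x + T w x &
      exists c : R, 0 <= c /\ forall v b, l2 v -> vnorm_le v b -> vnorm_le (T v) (c * b)].

Definition opdist_le (T S : op) (e : R) : Prop :=
  0 <= e /\ forall v b, l2 v -> vnorm_le v b ->
    vnorm_le (fun x => T v x - S v x) (e * b).

Definition is_adjoint (T S : op) : Prop :=
  forall v w, l2 v -> l2 w -> forall c, inner (T v) w c <-> inner v (S w) c.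

Definition linf (f : X -> C) : Prop := exists c : R, forall x, cabs (f x) <= c.
Definition mult (f : X -> C) : op := fun v x => f x * v x.

Definition chi (A : set X) : op := fun v x => if `[< A x >] then v x else 0.

Definition delta (y : X) : vec := fun x => if x == y then 1 else 0.

(** finite propagation: matrix entries T_{x,y} = (T delta_y)(x) vanish for d(x,y) > r *)
Definition finite_propagation (d : X -> X -> R) (T : op) : Prop :=
  exists r : R, forall x y, r < d x y -> T (delta y) x = 0.

(** C*_u(X): norm closure of the bounded finite propagation operators *)
Definition in_Cu (d : X -> X -> R) (T : op) : Prop :=
  bounded_op T /\ forall e : R, 0 < e -> exists S, [/\ bounded_op S,
    finite_propagation d S & opdist_le T S e].

Definition in_Cuq (d : X -> X -> R) (T : op) : Prop :=
  bounded_op T /\ forall e : R, 0 < e -> exists r : R, 0 < r /\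
    forall A B : set X, (forall a b, A a -> B b -> r <= d a b) ->
      opdist_le (op_comp (chi A) (op_comp T (chi B))) (fun v _ => 0) e.

Definition in_linf_op (T : op) : Prop := exists h, linf h /\ op_eq T (mult h).

Definition in_normaliser (inA : op -> Prop) (T : op) : Prop :=
  inA T /\ exists Ts : op, [/\ bounded_op Ts, is_adjoint T Ts &
    forall g, linf g ->
      in_linf_op (op_comp T (op_comp (mult g) Ts)) /\
      in_linf_op (op_comp Ts (op_comp (mult g) T))].

Definition bij_on (D Rg : set X) (theta : X -> X) : Prop :=
  [/\ forall x, D x -> Rg (theta x),
      forall x y, D x -> D y -> theta x = theta y -> x = y &
      forall y, Rg y -> exists2 x, D x & theta x = y].

(** V^theta, with (V^theta)_{x,y} = 1 iff x in D and y = theta x *)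
Definition Vtheta (D : set X) (theta : X -> X) : op :=
  fun v x => if `[< D x >] then v (theta x) else 0.

End Defs.

(* If T normalises l^oo(X) with adjoint T^*, then T delta_x T^* and T^* delta_x T
   are multiplication operators, hence diagonal; their off-diagonal entries are
   products T_{y x} conj(T_{y' x}) and T_{x y} conj(T_{x y'}), so every row and
   every column of the matrix of T has at most one non-zero entry.  Thus
   T = f V^theta, where theta is the partial bijection recording the positions of
   the non-zero entries and f their values.  Both C*_u(X) and C*_uq(X) force the
   entries T_{x y} to tend to 0 as d(x, y) grows, which is the decay of f.
   Conversely such an f V^theta is normalising, with adjoint
   conj(f o theta^-1) V^(theta^-1); it is the norm limit of its truncations to
   d(x, theta x) <= K, which have finite propagation, and it is quasi-local. *)

From HB Require Import structures.
From mathcomp Require Import all_boot all_order all_algebra.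
From mathcomp Require Import boolp classical_sets reals.
From mathcomp Require Import complex.
From mathcomp Require Import ring lra.
Import Order.TTheory GRing.Theory Num.Theory.
Local Open Scope ring_scope.
Set Implicit Arguments. Unset Strict Implicit.

Section ComplexModulus.
Variable R : realType.
Local Notation C := (complex R).
Implicit Types a b z : C.

Lemma cabs_normc z : cabs z = Normc.normc z.
Proof. by case: z. Qed.

Lemma cabs_ge0 z : 0 <= cabs z.
Proof. by case: z => a b /=; exact: sqrtr_ge0. Qed.

Lemma cabs0 : cabs (0 : C) = 0.
Proof. by rewrite cabs_normc Normc.normc0. Qed.

Lemma cabs1 : cabs (1 : C) = 1.
Proof. by rewrite cabs_normc Normc.normc1. Qed.

Lemma cabs_eq0 z : cabs z = 0 -> z = 0.
Proof. by rewrite cabs_normc => /Normc.eq0_normc. Qed.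

Lemma cabsM a b : cabs (a * b) = cabs a * cabs b.
Proof. by rewrite !cabs_normc Normc.normcM. Qed.

Lemma cabsD a b : cabs (a + b) <= cabs a + cabs b.
Proof. by rewrite !cabs_normc; exact: (le_normcD (a : Rcomplex R) b). Qed.

Lemma cabsN a : cabs (- a) = cabs a.
Proof. by rewrite !cabs_normc; exact: (normcN (a : Rcomplex R)). Qed.

Lemma cabsM_le a b c : cabs a <= c -> cabs (a * b) <= c * cabs b.
Proof. by move=> le_ac; rewrite cabsM ler_wpM2r // cabs_ge0. Qed.

Lemma cconj_conjc z : cconj z = conjc z.
Proof. by case: z. Qed.

Lemma cconj0 : cconj (0 : C) = 0.
Proof. by rewrite cconj_conjc rmorph0. Qed.

Lemma cconj1 : cconj (1 : C) = 1.
Proof. by rewrite cconj_conjc rmorph1. Qed.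

Lemma cconjM a b : cconj (a * b) = cconj a * cconj b.
Proof. by rewrite !cconj_conjc rmorphM. Qed.

Lemma cconjK z : cconj (cconj z) = z.
Proof. by rewrite !cconj_conjc conjcK. Qed.

Lemma cconj_eq0 z : cconj z = 0 -> z = 0.
Proof. by move=> z0; rewrite -[z]cconjK z0 cconj0. Qed.

Lemma cabs_cconj z : cabs (cconj z) = cabs z.
Proof. by case: z => a b /=; rewrite sqrrN. Qed.

End ComplexModulus.

Section UnconditionalSums.
Variables (R : realType) (X : eqType).
Local Notation C := (complex R).
Implicit Types (a b : X -> C) (s : seq X).

Lemma big_seq_supp (V : nmodType) (a : X -> V) s s' :
  uniq s -> uniq s' -> (forall x, a x != 0 -> (x \in s) = (x \in s')) ->
  \sum_(x <- s) a x = \sum_(x <- s') a x.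
Proof.
move=> us us' supp_ss'.
have drop0 t : \sum_(x <- t) a x = \sum_(x <- [seq x <- t | a x != 0]) a x.
  rewrite big_filter (bigID (fun x => a x != 0)) /= [X in _ + X]big1 ?addr0 //.
  by move=> x /negPn /eqP.
rewrite drop0 [RHS]drop0; apply/perm_big/uniq_perm; rewrite ?filter_uniq //.
by move=> x; rewrite !mem_filter; case: (boolP (a x != 0)) => //= /supp_ss'.
Qed.

Lemma has_sum_unique a c1 c2 : has_sum a c1 -> has_sum a c2 -> c1 = c2.
Proof.
move=> sum1 sum2; apply/eqP/negPn/negP => neq_c.
have e_gt0 : 0 < cabs (c1 - c2) / 2.
  rewrite divr_gt0 // lt_neqAle cabs_ge0 andbT eq_sym.
  by apply/eqP => /cabs_eq0/eqP; rewrite subr_eq0 (negbTE neq_c).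
have [s1 [_ near1]] := sum1 _ e_gt0; have [s2 [_ near2]] := sum2 _ e_gt0.
pose t := \sum_(x <- undup (s1 ++ s2)) a x.
have lt1 : cabs (t - c1) < cabs (c1 - c2) / 2.
  by apply: near1 => [|x s1x]; rewrite ?undup_uniq // mem_undup mem_cat s1x.
have lt2 : cabs (t - c2) < cabs (c1 - c2) / 2.
  by apply: near2 => [|x s2x]; rewrite ?undup_uniq // mem_undup mem_cat s2x orbT.
have : cabs (c1 - c2) <= cabs (t - c2) + cabs (t - c1).
  have -> : c1 - c2 = (t - c2) + - (t - c1) by ring.
  by rewrite -[cabs (t - c1)]cabsN cabsD.
lra.
Qed.

Lemma has_sum_supp1 a x : (forall z, z != x -> a z = 0) -> has_sum a (a x).
Proof.
move=> a_supp e e_gt0; exists [:: x]; split => // s us sub_xs.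
rewrite (big_seq_supp (s' := [:: x])) ?big_seq1 ?subrr ?cabs0 // => z.
have [-> _|/a_supp -> /eqP//] := eqVneq z x.
by rewrite mem_seq1 eqxx sub_xs // mem_seq1.
Qed.

Lemma has_sum0 : has_sum (fun _ : X => (0 : C)) 0.
Proof. by move=> e e_gt0; exists [::]; split => // s _ _; rewrite big1 // subrr cabs0. Qed.

End UnconditionalSums.

Section PartialBijection.
Variables (X : eqType) (D Rg : set X) (th : X -> X).
Hypothesis bij : bij_on D Rg th.

Lemma bij_on_inj x y : D x -> D y -> th x = th y -> x = y.
Proof. by case: bij => _ + _; apply. Qed.

Definition inv_on (y : X) : X :=
  match pselect (exists2 x, D x & th x = y) with
  | left ex => projT1 (cid2 ex) | right _ => y end.

Lemma inv_on_spec y : Rg y -> D (inv_on y) /\ th (inv_on y) = y.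
Proof.
move=> Rg_y; rewrite /inv_on; case: pselect => [ex|]; last by case: bij => _ _ /(_ _ Rg_y).
by have [] := projT2 (cid2 ex).
Qed.

Lemma inv_onK x : D x -> inv_on (th x) = x.
Proof.
move=> Dx; have [Rg_th _ _] := bij; have [D_inv th_inv] := inv_on_spec (Rg_th _ Dx).
exact: bij_on_inj.
Qed.

Lemma bij_on_inv : bij_on Rg D inv_on.
Proof.
split=> [y /inv_on_spec[]//|y y' /inv_on_spec[_ thy] /inv_on_spec[_ thy'] eq_inv|x Dx].
  by rewrite -thy -thy' eq_inv.
by case: bij => Rg_th _ _; exists (th x); [exact: Rg_th|exact: inv_onK].
Qed.

End PartialBijection.

Section Reindexing.
Variables (R : realType) (X : eqType) (D Rg : set X) (th : X -> X).
Variables (a b : X -> complex R).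
Hypotheses (bij : bij_on D Rg th)
  (a_supp : forall x, ~ D x -> a x = 0) (b_supp : forall y, ~ Rg y -> b y = 0)
  (b_th : forall x, D x -> b (th x) = a x).
Local Notation ps := (inv_on D th).

Lemma uniq_inv_on s : uniq s -> uniq [seq ps y | y <- s & `[< Rg y >]].
Proof.
have [_ ps_inj _] := bij_on_inv bij.
move=> us; rewrite map_inj_in_uniq ?filter_uniq // => y y'.
by rewrite !mem_filter => /andP[/asboolP Rg_y _] /andP[/asboolP Rg_y' _]; apply: ps_inj.
Qed.

Lemma big_inv_on s : uniq s ->
  \sum_(y <- s) b y = \sum_(x <- [seq ps y | y <- s & `[< Rg y >]]) a x.
Proof.
move=> us; rewrite big_map (big_seq_supp (s' := [seq y <- s | `[< Rg y >]])) ?filter_uniq //.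
  apply: eq_big_seq => y; rewrite mem_filter => /andP[/asboolP Rg_y _].
  by have [D_psy th_psy] := inv_on_spec bij Rg_y; rewrite -{1}th_psy b_th.
move=> y nz_by; rewrite mem_filter andb_idl // => _; apply/asboolP.
by apply: contrapT => /b_supp b0; rewrite b0 eqxx in nz_by.
Qed.

Lemma has_sum_bij c : has_sum a c -> has_sum b c.
Proof.
move=> sum_a e e_gt0; have [s0 [_ near_a]] := sum_a e e_gt0.
exists (undup [seq th x | x <- s0 & `[< D x >]]); split=> [|s us sub_s]; first exact: undup_uniq.
pose L := [seq ps y | y <- s & `[< Rg y >]].
have s0_L x : x \in s0 -> a x != 0 -> x \in L.
  move=> s0x nz_ax; have Dx : D x by apply: contrapT => /a_supp ax0; rewrite ax0 eqxx in nz_ax.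
  have [Rg_th _ _] := bij; apply/mapP; exists (th x); last by rewrite (inv_onK bij).
  rewrite mem_filter asboolT /=; last exact: Rg_th.
  apply: sub_s.
  by rewrite mem_undup map_f // mem_filter asboolT.
rewrite big_inv_on // (big_seq_supp (s' := undup (L ++ s0))) ?uniq_inv_on ?undup_uniq //.
  by apply: near_a => [|x s0x]; rewrite ?undup_uniq // mem_undup mem_cat s0x orbT.
move=> x nz_ax; rewrite mem_undup mem_cat; case: (boolP (x \in L)) => //= notLx.
by apply/esym/negbTE; apply: contra notLx => /s0_L; apply.
Qed.

End Reindexing.

Section SquareSummable.
Variables (R : realType) (X : eqType).
Local Notation C := (complex R).
Implicit Types (x y : X) (u v : vec R X) (b M : R).

Lemma vnorm_le_abs v b x : vnorm_le v b -> cabs (v x) <= b.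
Proof.
move=> [b_ge0 sum_le]; rewrite -(ler_sqr (cabs_ge0 _)) ?nnegrE //.
by have := sum_le [:: x] erefl; rewrite big_seq1.
Qed.

Lemma vnorm_le_pullback (E : set X) (ph : X -> X) u v M b :
  (forall x y, E x -> E y -> ph x = ph y -> x = y) -> 0 <= M -> vnorm_le v b ->
  (forall x, cabs (u x) <= M * (if `[< E x >] then cabs (v (ph x)) else 0)) ->
  vnorm_le u (M * b).
Proof.
move=> ph_inj M_ge0 [b_ge0 sum_v] u_le; split=> [|s us]; first exact: mulr_ge0.
pose w x := if `[< E x >] then cabs (v (ph x)) else 0.
have w_ge0 x : 0 <= w x by rewrite /w; case: ifP; rewrite ?cabs_ge0.
apply: (@le_trans _ _ (\sum_(x <- s) (M * w x) ^+ 2)).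
  by apply: ler_sum => x _; rewrite ler_sqr ?nnegrE ?mulr_ge0 ?cabs_ge0.
have -> : \sum_(x <- s) (M * w x) ^+ 2 =
    M ^+ 2 * \sum_(y <- [seq ph x | x <- s & `[< E x >]]) cabs (v y) ^+ 2.
  rewrite big_map big_filter mulr_sumr [RHS]big_mkcond; apply: eq_bigr => x _.
  by rewrite /w; case: ifP => _; rewrite exprMn // expr0n /= !mulr0.
rewrite exprMn ler_wpM2l ?sqr_ge0 // sum_v // map_inj_in_uniq ?filter_uniq // => x y.
by rewrite !mem_filter => /andP[/asboolP Ex _] /andP[/asboolP Ey _]; exact: ph_inj.
Qed.

Lemma vnorm_le0 : vnorm_le (fun _ : X => (0 : C)) 0.
Proof. by split=> // s _; rewrite big1 ?expr0n // => x _; rewrite cabs0 expr0n. Qed.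

Lemma l2_0 : l2 (fun _ : X => (0 : C)).
Proof. by exists 0; exact: vnorm_le0. Qed.

Lemma vnorm_le_delta y : vnorm_le (delta R y) 1.
Proof.
split=> // s us; rewrite (big_seq_supp (s' := if y \in s then [:: y] else [::])) //.
- by case: ifP; rewrite ?big_seq1 ?big_nil /delta ?eqxx ?cabs1 ?expr1n.
- by case: ifP.
- move=> x; rewrite /delta; case: (eqVneq x y) => [->|_]; last by rewrite cabs0 expr0n eqxx.
  by case: ifP => ys _; rewrite ?mem_seq1 ?eqxx.
Qed.

Lemma l2_delta y : l2 (delta R y).
Proof. by exists 1; exact: vnorm_le_delta. Qed.

Lemma linf_delta y : linf (delta R y).
Proof. by exists 1 => x; rewrite /delta; case: eqP; rewrite ?cabs1 ?cabs0. Qed.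

Lemma mult_delta y v : mult (delta R y) v = (fun x => v y * delta R y x).
Proof.
apply: funext => x; rewrite /mult /delta.
by case: (eqVneq x y) => [->|_]; rewrite ?mulr1 ?mul1r ?mulr0 ?mul0r.
Qed.

Lemma inner_delta v y : inner v (delta R y) (v y).
Proof.
have := @has_sum_supp1 R X (fun x => v x * cconj (delta R y x)) y.
rewrite /delta eqxx cconj1 mulr1; apply=> x /negbTE ->.
by rewrite cconj0 mulr0.
Qed.

End SquareSummable.

Section Operators.
Variables (R : realType) (X : eqType).
Local Notation C := (complex R).
Implicit Types (x y : X) (g : X -> C) (v : vec R X) (T : op R X).

Definition entry T x y : C := T (delta R y) x.

Definition wcomp g (E : set X) (ph : X -> X) : op R X := op_comp (mult g) (Vtheta E ph).

Lemma bounded_op0 T x : bounded_op T -> T (fun _ => 0) x = 0.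
Proof.
case=> _ T_lin _; have := T_lin 1 _ _ (l2_0 R X) (l2_0 R X) x.
have -> : (fun y : X => (1 : C) * 0 + 0) = (fun _ => 0) by apply: funext => y; rewrite mulr0 addr0.
by rewrite mul1r => /eqP; rewrite -subr_eq subrr eq_sym => /eqP.
Qed.

Lemma bounded_opZ T (a : C) v x : bounded_op T -> l2 v ->
  T (fun y => a * v y) x = a * T v x.
Proof.
move=> bT l2v; have [_ T_lin _] := bT; have := T_lin a _ _ l2v (l2_0 R X) x.
have -> : (fun y : X => a * v y + 0) = (fun y => a * v y) by apply: funext => y; rewrite addr0.
by rewrite bounded_op0 // addr0.
Qed.

Lemma bounded_op_entry T : bounded_op T ->
  exists2 c, 0 <= c & forall x y, cabs (entry T x y) <= c.
Proof.
case=> _ _ [c [c_ge0 T_le]]; exists c => // x y.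
rewrite /entry -[c]mulr1; apply: vnorm_le_abs.
exact: T_le (l2_delta R y) (vnorm_le_delta R y).
Qed.

Lemma linf_ge0 g : linf g -> exists2 c, 0 <= c & forall x, cabs (g x) <= c.
Proof.
case=> c g_le; exists (Num.max c 0); first by rewrite le_max lexx orbT.
by move=> x; apply: le_trans (g_le x) _; rewrite le_max lexx.
Qed.

Lemma linfM g h : linf g -> linf h -> linf (fun x => g x * h x).
Proof.
move=> /linf_ge0[c c_ge0 g_le] /linf_ge0[c' _ h_le]; exists (c * c') => x.
by rewrite cabsM ler_pM ?cabs_ge0.
Qed.

Lemma linf_cconj g : linf g -> linf (fun x => cconj (g x)).
Proof. by case=> c g_le; exists c => x; rewrite cabs_cconj. Qed.

Lemma linf_comp g (ph : X -> X) : linf g -> linf (fun x => g (ph x)).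
Proof. by case=> c g_le; exists c. Qed.

Lemma linf_restrict g (E : set X) : linf g -> linf (fun x => if `[< E x >] then g x else 0).
Proof.
move=> /linf_ge0[c c_ge0 g_le]; exists c => x.
by case: ifP; rewrite ?cabs0.
Qed.

Lemma vnorm_le_wcomp g (E : set X) ph c v b :
  (forall x y, E x -> E y -> ph x = ph y -> x = y) -> 0 <= c ->
  (forall x, E x -> cabs (g x) <= c) -> vnorm_le v b -> vnorm_le (wcomp g E ph v) (c * b).
Proof.
move=> ph_inj c_ge0 g_le v_le; apply: (vnorm_le_pullback ph_inj c_ge0 v_le) => x.
rewrite /wcomp /op_comp /mult /Vtheta.
by case: ifP => [/asboolP Ex|_]; [exact/cabsM_le/g_le|rewrite mulr0 cabs0 mulr0].
Qed.

Lemma wcomp_bounded g (E : set X) ph :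
  (forall x y, E x -> E y -> ph x = ph y -> x = y) -> linf g ->
  bounded_op (wcomp g E ph).
Proof.
move=> ph_inj /linf_ge0[c c_ge0 g_le].
have wcomp_le v b : vnorm_le v b -> vnorm_le (wcomp g E ph v) (c * b).
  by apply: vnorm_le_wcomp => // x _; exact: g_le.
split=> [v [b /wcomp_le]|a v w _ _ x|]; first by exists (c * b).
  by rewrite /wcomp /op_comp /mult /Vtheta; case: ifP => _; ring.
by exists c; split=> // v b _; exact: wcomp_le.
Qed.

Lemma vnorm_le_mult g v b c : 0 <= c -> (forall x, cabs (g x) <= c) ->
  vnorm_le v b -> vnorm_le (mult g v) (c * b).
Proof.
move=> c_ge0 g_le v_le.
apply: (vnorm_le_pullback (E := setT) (ph := id) (u := mult g v) _ c_ge0 v_le) => // x.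
by rewrite asboolT //; exact: cabsM_le.
Qed.

Lemma l2_mult g v : linf g -> l2 v -> l2 (mult g v).
Proof.
by move=> /linf_ge0[c c_ge0 g_le] [b v_le]; exists (c * b); exact: vnorm_le_mult.
Qed.

Lemma chi_delta (A : set X) y : A y -> chi A (delta R y) = delta R y.
Proof.
move=> Ay; apply: funext => x; rewrite /chi /delta.
by case: (eqVneq x y) => [->|]; [rewrite asboolT|case: ifP].
Qed.

Lemma vnorm_le_chi (A : set X) v b : vnorm_le v b -> vnorm_le (chi A v) b.
Proof.
move=> v_le; rewrite -[b]mul1r.
apply: (vnorm_le_pullback (E := setT) (ph := id) (u := chi A v) _ ler01 v_le) => // x.
by rewrite asboolT // mul1r /chi; case: ifP; rewrite ?cabs0 ?cabs_ge0.
Qed.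

End Operators.

Section EntryDecay.
Variables (R : realType) (X : eqType) (d : X -> X -> R).
Implicit Types (T : op R X).

Definition entries_decay T := forall e : R, 0 < e -> exists K : R, 0 < K /\
  forall x y, K < d x y -> cabs (entry T x y) <= e.

Lemma in_Cu_entries_decay T : in_Cu d T -> entries_decay T.
Proof.
case=> _ approx e e_gt0; have [S [_ [r S_prop] [_ T_S]]] := approx e e_gt0.
exists (Num.max r 1); split=> [|x y]; first by rewrite lt_max ltr01 orbT.
rewrite gt_max => /andP[r_lt _].
have := vnorm_le_abs x (T_S _ _ (l2_delta R y) (vnorm_le_delta R y)).
by rewrite S_prop // subr0 mulr1.
Qed.

Lemma in_Cuq_entries_decay T : in_Cuq d T -> entries_decay T.
Proof.
case=> _ qloc e e_gt0; have [r [r_gt0 T_loc]] := qloc e e_gt0.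
exists r; split=> // x y r_lt.
have [_ T_xy] : opdist_le (op_comp (chi [set x]%classic) (op_comp T (chi [set y]%classic)))
    (fun _ _ => 0) e by apply: T_loc => a b -> ->; exact: ltW.
have := vnorm_le_abs x (T_xy _ _ (l2_delta R y) (vnorm_le_delta R y)).
rewrite /op_comp chi_delta // /chi asboolT //.
by rewrite subr0 mulr1.
Qed.

End EntryDecay.

Section NormaliserEntries.
Variables (R : realType) (X : eqType).
Implicit Types (x y : X) (T S U : op R X).

Lemma linf_sandwich_entry S U x y y' : bounded_op S ->
  in_linf_op (op_comp S (op_comp (mult (delta R x)) U)) -> y != y' ->
  entry U x y * entry S y' x = 0.
Proof.
move=> bS [h [_ S_eq]] neq_yy'; have := S_eq _ (l2_delta R y) y'.
rewrite /op_comp mult_delta (bounded_opZ _ _ bS (l2_delta R x)) => ->.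
by rewrite /mult /delta eq_sym (negbTE neq_yy') mulr0.
Qed.

Variables T Ts : op R X.
Hypotheses (bT : bounded_op T) (bTs : bounded_op Ts) (adj : is_adjoint T Ts)
  (nor : forall g, linf g ->
     in_linf_op (op_comp T (op_comp (mult g) Ts)) /\
     in_linf_op (op_comp Ts (op_comp (mult g) T))).

Lemma adjoint_entry x y : entry Ts x y = cconj (entry T y x).
Proof.
have /(adj (l2_delta R x) (l2_delta R y)) sum_T := inner_delta (T (delta R x)) y.
have sum_Ts : has_sum (fun z => delta R x z * cconj (Ts (delta R y) z))
                      (cconj (Ts (delta R y) x)).
  have := @has_sum_supp1 R X (fun z => delta R x z * cconj (Ts (delta R y) z)) x.
  by rewrite /delta eqxx mul1r; apply=> z /negbTE ->; rewrite mul0r.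
by rewrite /entry (has_sum_unique sum_T sum_Ts) cconjK.
Qed.

Lemma has_sum_entries v x : l2 v -> has_sum (fun y => v y * entry T x y) (T v x).
Proof.
move=> l2v; have /(adj l2v (l2_delta R x)) := inner_delta (T v) x.
by rewrite /inner; under eq_fun => y do rewrite -/(entry Ts y x) adjoint_entry cconjK.
Qed.

Lemma entry_col_uniq x y y' : y != y' -> entry T y x = 0 \/ entry T y' x = 0.
Proof.
move=> neq_yy'; have /eqP := linf_sandwich_entry bT (nor (linf_delta R x)).1 neq_yy'.
by rewrite adjoint_entry mulf_eq0 => /orP[/eqP/cconj_eq0|/eqP]; [left|right].
Qed.

Lemma entry_row_uniq x y y' : y != y' -> entry T x y = 0 \/ entry T x y' = 0.
Proof.
move=> neq_yy'; have /eqP := linf_sandwich_entry bTs (nor (linf_delta R x)).2 neq_yy'.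
by rewrite adjoint_entry mulf_eq0 => /orP[/eqP|/eqP/cconj_eq0]; [left|right].
Qed.

Definition nzrows : set X := fun x => exists y, entry T x y != 0.

Definition nzcol x : X :=
  match pselect (nzrows x) with left ex => projT1 (cid ex) | right _ => x end.

Definition nzweight x := entry T x (nzcol x).

Lemma nzweight_neq0 x : nzrows x -> nzweight x != 0.
Proof. by rewrite /nzweight /nzcol; case: pselect => // ex _; exact: projT2 (cid ex). Qed.

Lemma entry_notin_nzrows x y : ~ nzrows x -> entry T x y = 0.
Proof. by move=> notDx; apply/eqP/negP => /negP nz; apply: notDx; exists y. Qed.

Lemma nzcol_uniq x y : nzrows x -> entry T x y != 0 -> y = nzcol x.
Proof.
move=> Dx nz_xy; apply/eqP/negP => /negP neq_y.
have [T0|T0] := entry_row_uniq x neq_y; first by rewrite T0 eqxx in nz_xy.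
by move: (nzweight_neq0 Dx); rewrite /nzweight T0 eqxx.
Qed.

Lemma bij_on_nzcol : bij_on nzrows (nzcol @` nzrows)%classic nzcol.
Proof.
split=> [x Dx|x x' Dx Dx' eq_col|y [x Dx <-]]; [by exists x| |by exists x].
apply/eqP/negP => /negP neq_x; have := nzweight_neq0 Dx; have := nzweight_neq0 Dx'.
by rewrite /nzweight -eq_col; have [|] := entry_col_uniq (nzcol x) neq_x => ->; rewrite eqxx.
Qed.

Lemma linf_nzweight : linf nzweight.
Proof. by have [c _ T_le] := bounded_op_entry bT; exists c => x; exact: T_le. Qed.

Lemma normaliser_eq_wcomp : op_eq T (wcomp nzweight nzrows nzcol).
Proof.
move=> v l2v x; have sum_T := has_sum_entries x l2v.
rewrite /wcomp /op_comp /mult /Vtheta; case: (pselect (nzrows x)) => Dx; last first.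
  rewrite asboolF // mulr0; apply: has_sum_unique sum_T _.
  by under eq_fun => y do rewrite entry_notin_nzrows // mulr0; exact: has_sum0.
rewrite asboolT // mulrC; apply: has_sum_unique sum_T _.
apply: has_sum_supp1 => y neq_y; apply/eqP; rewrite mulf_eq0; apply/orP; right.
by apply: contraR neq_y => /(nzcol_uniq Dx) ->.
Qed.

End NormaliserEntries.

Section OpEq.
Variables (R : realType) (X : eqType) (d : X -> X -> R).
Implicit Types (T S U : op R X).

Lemma op_eq_compl T S U : op_eq T S -> op_eq (op_comp U T) (op_comp U S).
Proof.
move=> eq_TS v l2v x; rewrite /op_comp.
by have -> : T v = S v by apply: funext; exact: eq_TS.
Qed.

Lemma op_eq_compr T S U : op_eq T S -> (forall v, l2 v -> l2 (U v)) ->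
  op_eq (op_comp T U) (op_comp S U).
Proof. by move=> eq_TS U_l2 v l2v x; exact/eq_TS/U_l2. Qed.

Lemma op_eq_trans T S U : op_eq T S -> op_eq S U -> op_eq T U.
Proof. by move=> eq_TS eq_SU v l2v x; rewrite eq_TS ?eq_SU. Qed.

Lemma opdist_le_op_eq T S U e : op_eq T S -> opdist_le S U e -> opdist_le T U e.
Proof.
move=> eq_TS [e_ge0 S_U]; split=> // v b l2v v_le.
by under eq_fun => x do rewrite eq_TS //; exact: S_U.
Qed.

Lemma in_Cu_op_eq T S : bounded_op T -> op_eq T S -> in_Cu d S -> in_Cu d T.
Proof.
move=> bT eq_TS [_ approx]; split=> // e e_gt0; have [U [bU fpU S_U]] := approx e e_gt0.
by exists U; split=> //; exact: opdist_le_op_eq S_U.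
Qed.

Lemma in_Cuq_op_eq T S : bounded_op T -> op_eq T S -> in_Cuq d S -> in_Cuq d T.
Proof.
move=> bT eq_TS [_ qloc]; split=> // e e_gt0; have [r [r_gt0 S_loc]] := qloc e e_gt0.
exists r; split=> // A B far_AB; apply: opdist_le_op_eq (S_loc A B far_AB).
apply/op_eq_compl/op_eq_compr => // v [b v_le]; exists b; exact: vnorm_le_chi.
Qed.

Lemma is_adjoint_op_eq T S U : op_eq T S -> is_adjoint S U -> is_adjoint T U.
Proof.
move=> eq_TS adj v w l2v l2w c; have -> : T v = S v by apply: funext; exact: eq_TS.
exact: adj.
Qed.

Lemma in_normaliser_op_eq (inA : op R X -> Prop) T S : inA T -> op_eq T S ->
  in_normaliser inA S -> in_normaliser inA T.
Proof.
move=> AT eq_TS [_ [U [bU adj nor]]]; split=> //; exists U; split=> //.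
  exact: is_adjoint_op_eq adj.
move=> g lg; have [[h1 [lh1 eq1]] [h2 [lh2 eq2]]] := nor g lg; split.
  exists h1; split=> //; apply: op_eq_trans eq1; apply: op_eq_compr => // v l2v.
  by apply: l2_mult => //; case: bU => + _ _; apply.
by exists h2; split=> //; apply: op_eq_trans eq2; apply: op_eq_compl; apply: op_eq_compl.
Qed.

End OpEq.

Section WeightedComposition.
Variables (R : realType) (X : eqType) (f : X -> complex R) (D Rg : set X) (th : X -> X).
Hypothesis bij : bij_on D Rg th.
Local Notation ps := (inv_on D th).
Local Notation W := (wcomp f D th).
Local Notation Wadj := (wcomp (fun y => cconj (f (ps y))) Rg ps).

Lemma wcomp_is_adjoint : is_adjoint W Wadj.
Proof.
have [Rg_th _ _] := bij.
move=> v w _ _ c; rewrite /inner /wcomp /op_comp /mult /Vtheta; split=> [sum_a|sum_b].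
  apply: (has_sum_bij bij _ _ _ sum_a).
  - by move=> x /asboolPn/negbTE->; rewrite !mulr0 mul0r.
  - by move=> y /asboolPn/negbTE->; rewrite mulr0 cconj0 mulr0.
  move=> x Dx; rewrite (asboolT Dx) (asboolT (Rg_th _ Dx)) (inv_onK bij Dx).
  by rewrite cconjM cconjK; ring.
apply: (has_sum_bij (bij_on_inv bij) _ _ _ sum_b).
- by move=> y /asboolPn/negbTE->; rewrite mulr0 cconj0 mulr0.
- by move=> x /asboolPn/negbTE->; rewrite !mulr0 mul0r.
move=> y Rg_y; have [Dy th_psy] := inv_on_spec bij Rg_y.
by rewrite !asboolT // th_psy cconjM cconjK; ring.
Qed.

Hypothesis lf : linf f.

Lemma wcomp_normalising g : linf g ->
  in_linf_op (op_comp W (op_comp (mult g) Wadj)) /\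
  in_linf_op (op_comp Wadj (op_comp (mult g) W)).
Proof.
move=> lg; split.
  exists (fun x => if `[< D x >] then f x * cconj (f x) * g (th x) else 0); split.
    apply: linf_restrict; apply: linfM; last exact: linf_comp.
    by apply: linfM => //; exact: linf_cconj.
  move=> w _ x; rewrite /wcomp /op_comp /mult /Vtheta.
  have [Dx|notDx] := pselect (D x); last by rewrite !asboolF // mulr0 mul0r.
  have [Rg_th _ _] := bij.
  by rewrite (asboolT Dx) (asboolT (Rg_th _ Dx)) (inv_onK bij Dx); ring.
exists (fun y => if `[< Rg y >] then cconj (f (ps y)) * g (ps y) * f (ps y) else 0); split.
  apply: linf_restrict; apply: linfM; last exact: linf_comp.
  by apply: linfM; [apply/linf_cconj/linf_comp|exact: linf_comp].
move=> w _ y; rewrite /wcomp /op_comp /mult /Vtheta.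
have [Rg_y|notRg_y] := pselect (Rg y); last by rewrite !asboolF // mulr0 mul0r.
have [Dy th_psy] := inv_on_spec bij Rg_y.
by rewrite (asboolT Rg_y) (asboolT Dy) th_psy; ring.
Qed.

Lemma wcomp_in_normaliser (inA : op R X -> Prop) : inA W -> in_normaliser inA W.
Proof.
move=> AW; split=> //; exists Wadj; split; last exact: wcomp_normalising.
  by apply: wcomp_bounded; [exact: bij_on_inj (bij_on_inv bij)|apply/linf_cconj/linf_comp].
exact: wcomp_is_adjoint.
Qed.

Variable d : X -> X -> R.
Hypothesis f_decay : forall e : R, 0 < e -> exists K : R, 0 < K /\
  forall x, D x -> K < d x (th x) -> cabs (f x) < e.

Lemma wcomp_in_Cu : in_Cu d W.
Proof.
split=> [|e e_gt0]; first exact: wcomp_bounded (bij_on_inj bij) lf.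
have [K [K_gt0 f_lt]] := f_decay e_gt0.
pose fK x := if `[< d x (th x) <= K >] then f x else 0.
exists (wcomp fK D th); split.
- apply: wcomp_bounded; first exact: (bij_on_inj bij).
  exact: linf_restrict.
- exists K => x y K_lt; rewrite /wcomp /op_comp /mult /Vtheta /delta /fK.
  case: ifP => [/asboolP le_K|_]; last by rewrite mul0r.
  case: ifP => _; last by rewrite mulr0.
  by case: eqP => [thx_y|_]; [move: le_K; rewrite thx_y leNgt K_lt|rewrite mulr0].
split=> [|v b _ v_le]; first exact: ltW.
have -> : (fun x => W v x - wcomp fK D th v x) = wcomp (fun x => f x - fK x) D th v.
  by apply: funext => x; rewrite /wcomp /op_comp /mult /Vtheta mulrBl.
apply: vnorm_le_wcomp (bij_on_inj bij) (ltW e_gt0) _ v_le => x Dx; rewrite /fK.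
case: ifP => [_|/asboolPn K_lt]; first by rewrite subrr cabs0 ltW.
by rewrite subr0 ltW // f_lt // ltNge; apply/negP.
Qed.

Lemma wcomp_in_Cuq : in_Cuq d W.
Proof.
split=> [|e e_gt0]; first exact: wcomp_bounded (bij_on_inj bij) lf.
have [K [K_gt0 f_lt]] := f_decay e_gt0.
exists (K + 1); split=> [|A B far_AB]; first by rewrite addr_gt0.
split=> [|v b _ v_le]; first exact: ltW.
pose fAB x := if `[< A x >] && `[< B (th x) >] then f x else 0.
have -> : (fun x => op_comp (chi A) (op_comp W (chi B)) v x - 0) = wcomp fAB D th v.
  apply: funext => x; rewrite subr0 /fAB /chi /wcomp /op_comp /mult /Vtheta.
  by case: `[< A x >]; case: `[< B (th x) >]; case: `[< D x >]; rewrite ?mul0r ?mulr0.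
apply: vnorm_le_wcomp (bij_on_inj bij) (ltW e_gt0) _ v_le => x Dx; rewrite /fAB.
case: ifP => [/andP[/asboolP Ax /asboolP Bthx]|_]; last by rewrite cabs0 ltW.
by apply/ltW/f_lt => //; have := far_AB _ _ Ax Bthx; lra.
Qed.

End WeightedComposition.

Section DecayingWeightedComposition.
Variables (R : realType) (X : eqType) (d : X -> X -> R).
Implicit Types (T : op R X).

Definition decaying_wcomp T := exists (f : X -> complex R) (D Rg : set X) (th : X -> X),
  [/\ linf f, bij_on D Rg th, op_eq T (wcomp f D th) &
      forall e : R, 0 < e -> exists K : R, 0 < K /\
        forall x, D x -> K < d x (th x) -> cabs (f x) < e].

Lemma normaliser_decaying_wcomp (inA : op R X -> Prop) T :
  bounded_op T -> in_normaliser inA T -> entries_decay d T -> decaying_wcomp T.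
Proof.
move=> bT [_ [Ts [bTs adj nor]]] decay.
exists (nzweight T), (nzrows T), (nzcol T @` nzrows T)%classic, (nzcol T); split.
- exact: linf_nzweight.
- exact: bij_on_nzcol adj nor.
- exact: normaliser_eq_wcomp bTs adj nor.
move=> e e_gt0; have e2_gt0 : 0 < e / 2 by rewrite divr_gt0.
have [K [K_gt0 T_le]] := decay _ e2_gt0.
by exists K; split=> // x _ /T_le; lra.
Qed.

Lemma decaying_wcomp_in_normaliser T : bounded_op T -> decaying_wcomp T ->
  in_normaliser (in_Cu d) T /\ in_normaliser (in_Cuq d) T.
Proof.
move=> bT [f [D [Rg [th [lf bij eq_T f_decay]]]]].
have Cu_W := wcomp_in_Cu bij lf f_decay; have Cuq_W := wcomp_in_Cuq bij lf f_decay.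
split.
  apply: (in_normaliser_op_eq _ eq_T (wcomp_in_normaliser bij lf Cu_W)).
  exact: in_Cu_op_eq bT eq_T Cu_W.
apply: (in_normaliser_op_eq _ eq_T (wcomp_in_normaliser bij lf Cuq_W)).
exact: in_Cuq_op_eq bT eq_T Cuq_W.
Qed.

End DecayingWeightedComposition.

Theorem lemma6p2 (R : realType) (X : eqType) (d : X -> X -> R)
  (hd : is_metric d) (hbg : bounded_geometry d) (T : op R X) :
  bounded_op T ->
  (in_normaliser (in_Cu d) T <-> in_normaliser (in_Cuq d) T) /\
  (in_normaliser (in_Cuq d) T <->
    exists (f : X -> complex R) (D Rg : set X) (theta : X -> X),
      [/\ linf f, bij_on D Rg theta,
          op_eq T (op_comp (mult f) (Vtheta D theta)) &
          forall e : R, 0 < e -> exists K : R, 0 < K /\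
            forall x, D x -> K < d x (theta x) -> cabs (f x) < e]).
Proof.
move=> bT.
have Cu_form (nT : in_normaliser (in_Cu d) T) : decaying_wcomp d T.
  exact: normaliser_decaying_wcomp bT nT (in_Cu_entries_decay nT.1).
have Cuq_form (nT : in_normaliser (in_Cuq d) T) : decaying_wcomp d T.
  exact: normaliser_decaying_wcomp bT nT (in_Cuq_entries_decay nT.1).
have form_nT := decaying_wcomp_in_normaliser bT.
split; split.
- by move/Cu_form/form_nT => [].
- by move/Cuq_form/form_nT => [].
- exact: Cuq_form.
- by move/form_nT => [].
Qed.
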